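(* Assume $\mu<0$ and conditions (C1) and (C2). Then for every $T\ge1$, $$\mu^*_T:=\mathbb E^*_{\pi^*}(f(X_1,Y_{1+T}))<\mu^*:=\pi^*(f).$$
   Context: Let $E$ be a finite set and $P,Q$ irreducible aperiodic stochastic $E\times E$ matrices with invariant probability vectors $\pi_P,\pi_Q$; $\pi=\pi_P\otimes\pi_Q$. Let $f:E\times E\to\mathbb Z$ with gcd of its values equal to $1$; $\nu(f)=\sum f\,d\nu$; $\mu=\pi(f)$. A cycle w.r.t. $P$ is a sequence $x_1,\dots,x_n$ with $P(x_k,x_{k+1})>0$ for all $k$, indices mod $n$. (C1): for some $n\ge1$ there are cycles $x_1,\dots,x_n$ w.r.t. $P$ and $y_1,\dots,y_n$ w.r.t. $Q$ with $\sum_kf(x_k,y_k)>0$. (C2): for every $T\ge1$ there are $n\ge1$ and cycles $x_1,\dots,x_n$ w.r.t. $P$ and $y_1,\dots,y_n$ w.r.t. $Q$ with $\sum_kf(x_k,y_k)\ne\sum_kf(x_k,y_{k+T\bmod n})$. Let $\Phi(\theta)_{(x,y),(x',y')}=e^{\theta f(x',y')}P_{x,x'}Q_{y,y'}$, $\varphi(\theta)$ its spectral radius, $\theta^*>0$ the unique positive solution of $\varphi(\theta)=1$, $r^*$ a positive right eigenvector of $\Phi(\theta^* )$ for eigenvalue 1, $R^*_{(x,y),(x',y')}=\frac{r^*(x',y')}{r^*(x,y)}\Phi(\theta^* )_{(x,y),(x',y')}$, and $\pi^*$ the invariant probability vector of $R^*$. $\mathbb P^*_{\pi^*}$ (expectation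 $\mathbb E^*_{\pi^*}$) is the law under which $(X_n,Y_n)_{n\ge0}$ is a stationary Markov chain on $E^2$ with transition matrix $R^*$. *)

From HB Require Import structures.
From mathcomp Require Import all_boot all_order all_algebra.
From mathcomp Require Import complex.
From mathcomp Require Import boolp classical_sets reals ereal topology normedtype sequences exp.
Set Implicit Arguments. Unset Strict Implicit. Unset Printing Implicit Defensive.
Import Order.TTheory GRing.Theory Num.Theory.
Import numFieldNormedType.Exports.
Local Open Scope ring_scope.

Section Defs.
Variable R : realType.

Fixpoint mpow (T : finType) (M : T -> T -> R) (n : nat) : T -> T -> R :=
  match n with
  | O => fun x y => if x == y then 1 else 0
  | S m => fun x y => \sum_(w : T) mpow M m x w * M w y
  end.

Definition stochastic (T : finType) (M : T -> T -> R) : Prop :=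
  (forall x y, 0 <= M x y) /\ (forall x, \sum_(y : T) M x y = 1).

Definition irreducible (T : finType) (M : T -> T -> R) : Prop :=
  forall x y, exists n : nat, 0 < mpow M n x y.

(* period of every state is 1: gcd { n >= 1 : M^n(x,x) > 0 } = 1 *)
Definition aperiodic (T : finType) (M : T -> T -> R) : Prop :=
  forall x : T, forall d : nat,
    (forall n : nat, (0 < n)%N -> 0 < mpow M n x x -> (d %| n)%N) -> d = 1%N.

Definition prob_vector (T : finType) (v : T -> R) : Prop :=
  (forall x, 0 <= v x) /\ \sum_(x : T) v x = 1.

Definition invariant_prob (T : finType) (M : T -> T -> R) (v : T -> R) : Prop :=
  prob_vector v /\ forall y, \sum_(x : T) v x * M x y = v y.

Definition gcd_values_one (E : finType) (f : E -> E -> int) : Prop :=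
  forall d : nat, (forall x y, (d %| `|f x y|)%N) -> d = 1%N.

Definition is_cycle (E : finType) (P : E -> E -> R) (n : nat) (x : nat -> E) : Prop :=
  forall k : nat, (k < n)%N -> 0 < P (x k) (x ((k.+1) %% n)%N).

Definition condC1 (E : finType) (P Q : E -> E -> R) (f : E -> E -> int) : Prop :=
  exists n : nat, exists x y : nat -> E,
    [/\ (1 <= n)%N, is_cycle P n x, is_cycle Q n y &
        (0 < \sum_(k < n) f (x k) (y k))%R].

Definition condC2 (E : finType) (P Q : E -> E -> R) (f : E -> E -> int) : Prop :=
  forall T : nat, (1 <= T)%N ->
  exists n : nat, exists x y : nat -> E,
    [/\ (1 <= n)%N, is_cycle P n x, is_cycle Q n y &
        \sum_(k < n) f (x k) (y k) != \sum_(k < n) f (x k) (y ((k + T) %% n)%N)].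

Definition Phi (E : finType) (P Q : E -> E -> R) (f : E -> E -> int) (theta : R)
  : (E * E)%type -> (E * E)%type -> R :=
  fun z z' => expR (theta * (f z'.1 z'.2)%:~R) * P z.1 z'.1 * Q z.2 z'.2.

Definition mx_of (T : finType) (M : T -> T -> R) : 'M[R]_#|T| :=
  \matrix_(i, j) M (enum_val i) (enum_val j).

Definition modulus (z : R[i]) : R := Num.sqrt (complex.Re z ^+ 2 + complex.Im z ^+ 2).

Definition spectral_radius (T : finType) (M : T -> T -> R) : R :=
  sup [set modulus z | z in [set z : R[i] |
        root (char_poly (map_mx (real_complex R) (mx_of M))) z]].

Definition expect (T : finType) (v : T -> R) (g : T -> int) : R :=
  \sum_(z : T) v z * (g z)%:~R.

Definition Rstar (T : finType) (Phi : T -> T -> R) (r : T -> R) : T -> T -> R :=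
  fun z z' => r z' / r z * Phi z z'.

(* E_pi (g(X_1, Y_{1+T})) for a Markov chain (X_n,Y_n) with transition matrix M
   started from X_0 ~ pi :  sum over z0, z1, z' of
   pi(z0) M(z0,z1) M^T(z1,z') g(z1.1, z'.2) *)
Definition lagged_expect (E : finType) (M : (E * E)%type -> (E * E)%type -> R)
  (v : (E * E)%type -> R) (g : E -> E -> int) (T : nat) : R :=
  \sum_(z0 : E * E) \sum_(z1 : E * E) \sum_(z' : E * E)
     v z0 * M z0 z1 * mpow M T z1 z' * (g z1.1 z'.2)%:~R.

End Defs.

From HB Require Import structures.
From mathcomp Require Import all_boot all_order all_algebra.
From mathcomp Require Import complex.
From mathcomp Require Import boolp classical_sets reals ereal topology normedtype sequences exp.
From mathcomp Require Import ring.
Import Order.TTheory GRing.Theory Num.Theory.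
Set Implicit Arguments. Unset Strict Implicit. Unset Printing Implicit Defensive.

(* Let T = m + 1 and consider, under the stationary R*-chain, the window
   W_0 = (X_0, Y_0, ..., Y_T) together with the next step (X_1, Y_{T+1}).  Summing out
   the X-coordinate along a fixed Y-path gives a positive weight, which makes the
   windows a stationary Markov chain.  Compare its transition law p with the law q in
   which (X_1, Y_{T+1}) is drawn from R* at (X_0, Y_T) instead: ln (q / p) telescopes
   along the window chain, so its p-mean is thetastar times mu*_T - mu*, while Gibbs'
   inequality makes this mean negative unless q = p on the support of p.  A C2 cycle
   lies in the support of pi* (irreducibility and aperiodicity), and if q = p along it
   the telescoping forces the sums of f along the cycle with and without lag T to
   agree, contradicting C2. *)

Section MonoidResidues.
Variable A : nat -> Prop.
Hypothesis A0 : A 0.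
Hypothesis AD : forall s t, A s -> A t -> A (s + t).
Hypothesis A_coprime : forall d, (forall t, 0 < t -> A t -> d %| t) -> d = 1.

Lemma monoidMn k t : A t -> A (k * t).
Proof. by move=> At; elim: k => [|k IH]; [rewrite mul0n | rewrite mulSn; apply: AD]. Qed.

Lemma monoid_residue n c : 0 < n -> exists2 t, A t & t = c %[mod n].
Proof.
move=> n_gt0.
pose Res k := (0 < k) && `[< exists2 t, A t & t = k %[mod n] >].
have Res_n : Res n by rewrite /Res n_gt0 /=; apply/asboolP; exists 0; rewrite ?modnn ?mod0n.
have [d /andP[d_gt0 /asboolP[ts Ats tsd]] d_min] := ex_minnP (ex_intro Res n Res_n).
(* [(n - 1) * ts] acts as [- d] modulo [n] *)
have loop : (n - 1) * ts + d = 0 %[mod n].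
  by rewrite -modnDmr -tsd modnDmr -{2}[ts]mul1n -mulnDl subnK // modnMr mod0n.
have d_dvd u : A u -> d %| u.
  move=> Au; set q := u %/ d; set rho := u %% d.
  have At : A (u + q * ((n - 1) * ts)) by apply: AD => //; do 2 apply: monoidMn.
  have t_rho : u + q * ((n - 1) * ts) = rho %[mod n].
    apply/eqP; rewrite -(eqn_modDr (q * d)); apply/eqP.
    rewrite -addnA -mulnDr -modnDmr -modnMmr loop modnMmr muln0 mod0n addn0.
    by rewrite addnC -divn_eq.
  apply/eqP; case: (posnP rho) => // rho_gt0.
  have : d <= rho.
    by apply: d_min; rewrite /Res rho_gt0 /=; apply/asboolP; exists (u + q * ((n - 1) * ts)).
  by rewrite leqNgt ltn_pmod.
have d1 : d = 1 by apply: A_coprime => t _; exact: d_dvd.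
by exists (c * ts); [exact: monoidMn | rewrite -modnMmr tsd d1 modnMmr muln1].
Qed.

End MonoidResidues.

Local Open Scope ring_scope.

Lemma sumr_ge_term (R : numDomainType) (I : finType) (F : I -> R) i :
  (forall j, 0 <= F j) -> F i <= \sum_j F j.
Proof. by move=> F_ge0; rewrite (bigD1 i) //= lerDl sumr_ge0. Qed.

Lemma psumr_gt0P (R : numDomainType) (I : finType) (F : I -> R) :
  (forall i, 0 <= F i) -> 0 < \sum_i F i -> exists i, 0 < F i.
Proof.
move=> F_ge0 /lt0r_neq0/eqP sum_neq0.
by have [i /andP[_ Fi]] := psumr_neq0P (fun i _ => F_ge0 i) sum_neq0; exists i.
Qed.

Lemma ler_ltr_sum (R : numDomainType) (I : finType) (F G : I -> R) i :
  (forall j, F j <= G j) -> F i < G i -> \sum_j F j < \sum_j G j.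
Proof.
move=> FG FGi; rewrite (bigD1 i) //= [ltRHS](bigD1 i) //=.
by rewrite ltr_leD // ler_sum.
Qed.

Section MatrixPowers.
Variables (R : realType) (T : finType).
Implicit Types (M : T -> T -> R) (v r : T -> R).

Lemma mpow0_mull M (F : T -> R) x : \sum_y mpow M 0 x y * F y = F x.
Proof.
rewrite (bigD1 x) //= eqxx mul1r big1 ?addr0 // => y /negbTE.
by rewrite eq_sym => ->; rewrite mul0r.
Qed.

Lemma mpow0_mulr M (F : T -> R) y : \sum_x F x * mpow M 0 x y = F y.
Proof.
rewrite (bigD1 y) //= eqxx mulr1 big1 ?addr0 // => x /negbTE ->.
by rewrite mulr0.
Qed.

Lemma mpowD M a b x z : mpow M (a + b) x z = \sum_y mpow M a x y * mpow M b y z.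
Proof.
elim: b z => [|b IH] z; first by rewrite addn0 mpow0_mulr.
rewrite addnS /=; under eq_bigr do rewrite IH big_distrl /=.
rewrite exchange_big /=; apply: eq_bigr => y _.
by rewrite big_distrr /=; apply: eq_bigr => w _; rewrite mulrA.
Qed.

Lemma mpow1 M x y : mpow M 1 x y = M x y.
Proof. exact: mpow0_mull. Qed.

Lemma mpowSl M n x y : mpow M n.+1 x y = \sum_w M x w * mpow M n w y.
Proof. by rewrite -add1n mpowD; apply: eq_bigr => w _; rewrite mpow1. Qed.

Lemma mpow_rows1 M n x : (forall x', \sum_y M x' y = 1) -> \sum_y mpow M n x y = 1.
Proof.
move=> M1; elim: n x => [|n IH] x.
  by rewrite -[RHS](mpow0_mull M (fun=> 1) x); apply: eq_bigr => y _; rewrite mulr1.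
rewrite /= exchange_big /= -[RHS](IH x); apply: eq_bigr => w _.
by rewrite -big_distrr /= M1 mulr1.
Qed.

Lemma invariant_mpow M v n y : invariant_prob M v -> \sum_x v x * mpow M n x y = v y.
Proof.
move=> [_ vM]; elim: n y => [|n IH] y; first exact: mpow0_mulr.
under eq_bigr do rewrite /= big_distrr /=.
rewrite exchange_big /= -[RHS]vM; apply: eq_bigr => w _.
by rewrite -IH big_distrl /=; apply: eq_bigr => x _; rewrite mulrA.
Qed.

Lemma mpow_Rstar M r n x y : (forall x, r x != 0) ->
  mpow (Rstar M r) n x y = r y / r x * mpow M n x y.
Proof.
move=> r_neq0; elim: n y => [|n IH] y /=.
  by case: eqP => [->|_]; rewrite ?mulr0 // mulr1 divff.
rewrite big_distrr /=; apply: eq_bigr => w _; rewrite IH /Rstar.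
by field; rewrite !r_neq0.
Qed.

Lemma Rstar_rows1 M r x : r x != 0 -> \sum_y M x y * r y = r x ->
  \sum_y Rstar M r x y = 1.
Proof.
move=> rx_neq0 Mr; rewrite -(divff rx_neq0) -{1}Mr mulr_suml.
by apply: eq_bigr => y _; rewrite /Rstar mulrC mulrA.
Qed.

Section Nonnegative.
Variable M : T -> T -> R.
Hypothesis M_ge0 : forall x y, 0 <= M x y.

Lemma mpow_ge0 n x y : 0 <= mpow M n x y.
Proof.
elim: n y => [|n IH] y /=; first by case: eqP.
by apply: sumr_ge0 => w _; rewrite mulr_ge0.
Qed.

Lemma mpowD_gt0 a b x y z :
  0 < mpow M a x y -> 0 < mpow M b y z -> 0 < mpow M (a + b) x z.
Proof.
move=> Mxy Myz; rewrite mpowD; apply: lt_le_trans (sumr_ge_term y _).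
  by rewrite mulr_gt0.
by move=> w; rewrite mulr_ge0 ?mpow_ge0.
Qed.

Lemma mpow_path_gt0 (x : nat -> T) n :
  (forall i, 0 < M (x i) (x i.+1)) -> 0 < mpow M n (x 0%N) (x n).
Proof.
move=> Mx; elim: n => [|n IH]; first by rewrite /= eqxx.
by rewrite -addn1; apply: mpowD_gt0 IH _; rewrite mpow1 addn1.
Qed.

Lemma mpowMn_gt0 k n x : 0 < mpow M n x x -> 0 < mpow M (k * n) x x.
Proof.
move=> Mn; elim: k => [|k IH]; first by rewrite mul0n /= eqxx ltr01.
by rewrite mulSn; exact: mpowD_gt0 Mn IH.
Qed.

Lemma invariant_prob_gt0 v n x y : invariant_prob M v ->
  0 < v x -> 0 < mpow M n x y -> 0 < v y.
Proof.
move=> vM vx Mxy; rewrite -(invariant_mpow n y vM).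
apply: lt_le_trans (sumr_ge_term x _); first by rewrite mulr_gt0.
by case: vM => -[v_ge0 _] _ w; rewrite mulr_ge0 ?mpow_ge0.
Qed.

End Nonnegative.

End MatrixPowers.

Lemma sum_pair (V : nmodType) (I J : finType) (F : I * J -> V) :
  \sum_p F p = \sum_i \sum_j F (i, j).
Proof. by rewrite pair_bigA; apply: eq_bigr => -[]. Qed.

Section TupleSums.
Variables (V : nmodType) (T : finType).

Lemma sum_tuple0 (F : 0.-tuple T -> V) : \sum_t F t = F [tuple].
Proof. by rewrite (big_pred1 [tuple]) // => t; apply/esym/eqP; exact: tuple0. Qed.

Lemma sum_tuple_cons n (F : n.+1.-tuple T -> V) :
  \sum_t F t = \sum_x \sum_(t : n.-tuple T) F [tuple of x :: t].
Proof.
rewrite pair_bigA /= (reindex (fun p : T * n.-tuple T => [tuple of p.1 :: p.2])) //.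
exists (fun t => (thead t, [tuple of behead t])) => [[x t] _ | t _] /=.
  by congr pair; apply: val_inj.
by apply: val_inj; case/tupleP: t.
Qed.

End TupleSums.

Lemma size_mkseq_eq (T : Type) (F : nat -> T) n : size (mkseq F n) == n.
Proof. by rewrite size_mkseq. Qed.
Canonical mkseq_tuple (T : Type) (F : nat -> T) n := Tuple (size_mkseq_eq F n).

Section PathProduct.
Variables (R : realType) (T : finType) (M : T -> T -> R).

Fixpoint path_prod (x : T) (s : seq T) : R :=
  if s is y :: s' then M x y * path_prod y s' else 1.

Lemma path_prod_ge0 x s : (forall x y, 0 <= M x y) -> 0 <= path_prod x s.
Proof. by move=> M_ge0; elim: s x => [|y s IH] x //=; rewrite mulr_ge0. Qed.

Lemma path_prod_rcons x s y : path_prod x (rcons s y) = path_prod x s * M (last x s) y.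
Proof. by elim: s x => [|z s IH] x /=; rewrite ?mul1r ?mulr1 ?IH ?mulrA. Qed.

Lemma path_prod_belast x y s :
  path_prod x (belast y s) * M (last x (belast y s)) (last y s) = M x y * path_prod y s.
Proof. by rewrite -path_prod_rcons -lastI. Qed.

Lemma path_prod_mkseq_gt0 (x : nat -> T) k n :
  (forall i, 0 < M (x i) (x i.+1)) -> 0 < path_prod (x k) (mkseq (fun i => x (k + i.+1)%N) n).
Proof.
move=> Mx; elim: n => [|n IH]; first exact: ltr01.
rewrite mkseqS path_prod_rcons mulr_gt0 //.
case: n {IH} => [|n]; first by rewrite addn1; exact: Mx.
by rewrite mkseqS last_rcons !addnS; exact: Mx.
Qed.

End PathProduct.

Section Cycles.
Variables (R : realType) (T : finType) (M : T -> T -> R) (n : nat) (x : nat -> T).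
Hypotheses (n_gt0 : (0 < n)%N) (x_cycle : is_cycle M n x).

Lemma is_cycle_mod k : 0 < M (x (k %% n)) (x (k.+1 %% n)).
Proof. by rewrite -[k.+1]addn1 -modnDml addn1; apply: x_cycle; rewrite ltn_pmod. Qed.

Lemma is_cycle_mpow_gt0 : (forall x y, 0 <= M x y) -> 0 < mpow M n (x 0%N) (x 0%N).
Proof.
move=> M_ge0; have := mpow_path_gt0 M_ge0 n is_cycle_mod.
by rewrite mod0n modnn.
Qed.

End Cycles.

Lemma mpow_simultaneous_gt0 (R : realType) (T U : finType) (P : T -> T -> R)
    (Q : U -> U -> R) n a x0 b y0 :
  (forall x y, 0 <= P x y) -> (forall x y, 0 <= Q x y) -> aperiodic P -> (0 < n)%N ->
  0 < mpow P n x0 x0 -> 0 < mpow Q n y0 y0 ->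
  (exists n1, 0 < mpow P n1 a x0) -> (exists n2, 0 < mpow Q n2 b y0) ->
  exists N, 0 < mpow P N a x0 /\ 0 < mpow Q N b y0.
Proof.
move=> P_ge0 Q_ge0 aperP n_gt0 Pn Qn [n1 Pa] [n2 Qb].
(* chosen so that n1 + t = n2 %[mod n] *)
have [t Pt t_mod] : exists2 t, 0 < mpow P t x0 x0 & t = n2 + (n - 1) * n1 %[mod n].
  apply: monoid_residue => //; first by rewrite /= eqxx ltr01.
    by move=> s t; exact: mpowD_gt0.
  by move=> d dvd_d; apply: (aperP x0) => t t_gt0 Pt; apply: dvd_d.
have [N N_def] : exists N, N = (n1 + (t + n2 * n))%N by eexists.
have N_mod : N = n2 %[mod n].
  rewrite N_def addnA addnC modnMDl -modnDmr t_mod modnDmr.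
  have -> : (n1 + (n2 + (n - 1) * n1) = n1 * n + n2)%N.
    by rewrite addnCA addnC mulnC -{1}[n1]muln1 -mulnDr subnKC.
  by rewrite modnMDl.
have n2_le_N : (n2 <= N)%N.
  by rewrite N_def (leq_trans (leq_pmulr n2 n_gt0)) // addnA addnC leq_addr.
have dvd_n : (n %| N - n2)%N by rewrite -eqn_mod_dvd // N_mod.
exists N; split.
  by rewrite N_def; exact: (mpowD_gt0 P_ge0 Pa (mpowD_gt0 P_ge0 Pt (mpowMn_gt0 P_ge0 n2 Pn))).
rewrite -(subnKC n2_le_N) -(divnK dvd_n).
exact: (mpowD_gt0 Q_ge0 Qb (mpowMn_gt0 Q_ge0 _ Qn)).
Qed.

Lemma lagged_expectE (R : realType) (E : finType) (M : E * E -> E * E -> R) v g n :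
  invariant_prob M v ->
  lagged_expect M v g n = \sum_z \sum_z' v z * mpow M n z z' * (g z.1 z'.2)%:~R.
Proof.
move=> [_ vM]; rewrite /lagged_expect exchange_big /=; apply: eq_bigr => z _.
rewrite exchange_big /=; apply: eq_bigr => z' _.
by rewrite -(vM z) !mulr_suml.
Qed.

Section Gibbs.
Variable R : realType.

Lemma ln_le_subr1 (u : R) : 0 < u -> ln u <= u - 1.
Proof. by move=> u_gt0; have := expR_ge1Dx (ln u); rewrite lnK ?posrE // lerBrDl. Qed.

Lemma ln_lt_subr1 (u : R) : 0 < u -> u != 1 -> ln u < u - 1.
Proof.
move=> u_gt0 u_neq1; have := @expR_gt1Dx R (ln u).
by rewrite ln_eq0 // u_neq1 lnK ?posrE // ltrBrDl; apply.
Qed.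

Lemma mulr_lnB_le (p q : R) : 0 < p -> 0 < q -> p * (ln q - ln p) <= q - p.
Proof.
move=> p_gt0 q_gt0; rewrite -ln_div ?posrE //.
have := ler_wpM2l (ltW p_gt0) (ln_le_subr1 (divr_gt0 q_gt0 p_gt0)).
by rewrite mulrBr mulr1 [p * (q / p)]mulrC divfK ?gt_eqF.
Qed.

Lemma mulr_lnB_lt (p q : R) : 0 < p -> 0 < q -> q != p -> p * (ln q - ln p) < q - p.
Proof.
move=> p_gt0 q_gt0 qp; rewrite -ln_div ?posrE //.
have qp1 : q / p != 1.
  by apply: contra qp => /eqP qp1; rewrite -[q](divfK (lt0r_neq0 p_gt0)) qp1 mul1r.
have := ltr_pM2l p_gt0 (ln (q / p)) (q / p - 1).
rewrite ln_lt_subr1 ?divr_gt0 // => /esym.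
by rewrite mulrBr mulr1 [p * (q / p)]mulrC divfK ?gt_eqF.
Qed.

Lemma gibbs_lt (I : finType) (c p q : I -> R) i :
  (forall j, 0 <= c j) -> (forall j, 0 < p j) -> (forall j, 0 < q j) ->
  0 < c i -> q i != p i ->
  \sum_j c j * p j * (ln (q j) - ln (p j)) < \sum_j c j * q j - \sum_j c j * p j.
Proof.
move=> c_ge0 p_gt0 q_gt0 ci qpi; rewrite -sumrB.
apply: (ler_ltr_sum (i := i)) => [j|]; rewrite -mulrA -mulrBr.
  by rewrite ler_wpM2l // mulr_lnB_le.
by rewrite ltr_pM2l // mulr_lnB_lt.
Qed.

End Gibbs.

Section WindowChain.
Variables (R : realType) (E : finType) (P Q : E -> E -> R) (f : E -> E -> int) (th : R).
Variables (r pi : E * E -> R).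
Hypotheses (P_ge0 : forall x y, 0 <= P x y) (P_rows1 : forall x, \sum_y P x y = 1).
Hypothesis Q_ge0 : forall x y, 0 <= Q x y.
Hypothesis r_gt0 : forall z, 0 < r z.
Hypothesis r_eigen : forall z, \sum_z' Phi P Q f th z z' * r z' = r z.
Hypothesis pi_inv : invariant_prob (Rstar (Phi P Q f th) r) pi.

Local Notation Phi := (Phi P Q f th).
Local Notation Rs := (Rstar Phi r).
Local Notation fR x y := ((f x y)%:~R : R).

Definition tilt x y : R := expR (th * fR x y).

Lemma tilt_gt0 x y : 0 < tilt x y.
Proof. exact: expR_gt0. Qed.

Lemma PhiE z z' : Phi z z' = tilt z'.1 z'.2 * P z.1 z'.1 * Q z.2 z'.2.
Proof. by []. Qed.

Lemma Phi_ge0 z z' : 0 <= Phi z z'.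
Proof. by rewrite PhiE !mulr_ge0 // ltW // tilt_gt0. Qed.

Lemma r_neq0 z : r z != 0.
Proof. exact: lt0r_neq0. Qed.

Lemma Rs_ge0 z z' : 0 <= Rs z z'.
Proof. by rewrite /Rstar mulr_ge0 ?divr_ge0 ?Phi_ge0 // ltW. Qed.

Lemma sum_mpow_Rs n z : \sum_z' mpow Rs n z z' = 1.
Proof. by apply: mpow_rows1 => z'; apply: Rstar_rows1; rewrite ?r_neq0 ?r_eigen. Qed.

Lemma pi_div_r_Phi z' : \sum_z pi z / r z * Phi z z' = pi z' / r z'.
Proof.
case: pi_inv => _ piRs; apply: (mulIf (r_neq0 z')); rewrite divfK ?r_neq0 //.
rewrite -[in RHS]piRs mulr_suml; apply: eq_bigr => z _; rewrite /Rstar.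
by field; rewrite r_neq0.
Qed.

Lemma mpow_Phi_gt0 N x y x' y' :
  0 < mpow P N x x' -> 0 < mpow Q N y y' -> 0 < mpow Phi N (x, y) (x', y').
Proof.
elim: N x' y' => [|N IH] x' y' /=.
  case: eqP => [<-|_]; last by rewrite ltxx.
  by case: eqP => [<-|_]; rewrite ?ltxx // eqxx.
move=> PN QN.
have [w] := psumr_gt0P (fun w => mulr_ge0 (mpow_ge0 P_ge0 N x w) (P_ge0 w x')) PN.
rewrite mulr_ge0_gt0 ?mpow_ge0 // => /andP[Pxw Pwx].
have [v] := psumr_gt0P (fun v => mulr_ge0 (mpow_ge0 Q_ge0 N y v) (Q_ge0 v y')) QN.
rewrite mulr_ge0_gt0 ?mpow_ge0 // => /andP[Qyv Qvy].
apply: lt_le_trans (sumr_ge_term (w, v) _).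
  by rewrite mulr_gt0 ?IH // PhiE !mulr_gt0 ?tilt_gt0.
by move=> u; rewrite mulr_ge0 ?Phi_ge0 // mpow_ge0 //; exact: Phi_ge0.
Qed.

Lemma invariant_reach_gt0 N z z' :
  0 < pi z -> 0 < mpow P N z.1 z'.1 -> 0 < mpow Q N z.2 z'.2 -> 0 < pi z'.
Proof.
case: z z' => [x y] [x' y'] /= pi_z PN QN.
apply: (invariant_prob_gt0 (n := N) Rs_ge0 pi_inv pi_z).
rewrite mpow_Rstar; last exact: r_neq0.
by apply: mulr_gt0; [exact: divr_gt0 | exact: mpow_Phi_gt0].
Qed.

Lemma pi_cycle_gt0 n (xs ys : nat -> E) :
  irreducible P -> irreducible Q -> aperiodic P ->
  (0 < n)%N -> is_cycle P n xs -> is_cycle Q n ys ->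
  forall k, 0 < pi (xs (k %% n)%N, ys (k %% n)%N).
Proof.
move=> P_irr Q_irr P_aper n_gt0 xs_cycle ys_cycle.
have [z pi_z] : exists z, 0 < pi z.
  by case: pi_inv => -[pi_ge0 pi1] _; apply: psumr_gt0P; rewrite ?pi1.
have [N [PN QN]] := mpow_simultaneous_gt0 P_ge0 Q_ge0 P_aper n_gt0
  (is_cycle_mpow_gt0 n_gt0 xs_cycle P_ge0) (is_cycle_mpow_gt0 n_gt0 ys_cycle Q_ge0)
  (P_irr z.1 (xs 0%N)) (Q_irr z.2 (ys 0%N)).
elim=> [|k IH].
  by rewrite mod0n; exact: (invariant_reach_gt0 (z' := (xs 0%N, ys 0%N)) pi_z PN QN).
apply: (invariant_reach_gt0 (N := 1%N) (z' := (xs (k.+1 %% n)%N, ys (k.+1 %% n)%N)) IH).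
  by rewrite mpow1; exact: (is_cycle_mod n_gt0 xs_cycle).
by rewrite mpow1; exact: (is_cycle_mod n_gt0 ys_cycle).
Qed.

(* The Phi-weight of the Y-path [us] issued from [z], summed over all X-paths and closed
   by [r]. *)
Fixpoint path_weight (z : E * E) (us : seq E) : R :=
  if us is y :: vs then \sum_x P z.1 x * tilt x y * path_weight (x, y) vs else r z.

Lemma path_weight_gt0 z us : 0 < path_weight z us.
Proof.
elim: us z => [|y vs IH] z /=; first exact: r_gt0.
have [x Px] : exists x, 0 < P z.1 x.
  by apply: psumr_gt0P => [x|]; [exact: P_ge0 | rewrite P_rows1 ltr01].
apply: lt_le_trans (sumr_ge_term x _); first by rewrite !mulr_gt0 ?tilt_gt0.
by move=> x'; rewrite !mulr_ge0 ?P_ge0 ?ltW ?tilt_gt0.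
Qed.

Lemma path_weight_rcons z us :
  \sum_y Q (last z.2 us) y * path_weight z (rcons us y) = path_weight z us.
Proof.
elim: us z => [|y1 vs IH] z /=.
  rewrite -[RHS]r_eigen sum_pair exchange_big /=; apply: eq_bigr => y _.
  by rewrite big_distrr /=; apply: eq_bigr => x _; rewrite PhiE /=; ring.
under eq_bigr do rewrite big_distrr /=.
rewrite exchange_big /=; apply: eq_bigr => x _.
by rewrite -IH big_distrr /=; apply: eq_bigr => y _; ring.
Qed.

Lemma sum_path_weight n z (G : E -> R) :
  \sum_(us : n.-tuple E) path_prod Q z.2 us * path_weight z us * G (last z.2 us) =
  \sum_z' mpow Phi n z z' * r z' * G z'.2.
Proof.
elim: n z => [|n IH] z.
  by rewrite sum_tuple0 /= mul1r; under eq_bigr do rewrite -mulrA; rewrite mpow0_mull.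
rewrite sum_tuple_cons.
under [RHS]eq_bigr do rewrite mpowSl !mulr_suml.
rewrite [RHS]exchange_big /= [RHS]sum_pair [RHS]exchange_big /=.
apply: eq_bigr => y _; under eq_bigr do rewrite mulrAC big_distrr /=.
rewrite exchange_big /=; apply: eq_bigr => x _.
transitivity (Phi z (x, y) * \sum_z' mpow Phi n (x, y) z' * r z' * G z'.2).
  by rewrite -IH big_distrr /=; apply: eq_bigr => us _; rewrite PhiE /=; ring.
by rewrite big_distrr /=; apply: eq_bigr => z' _; rewrite !mulrA.
Qed.

Definition window n := ((E * E) * n.-tuple E)%type.

(* The law of (X_0, Y_0, ..., Y_n) under the stationary R*-chain. *)
Definition window_law n (w : window n) : R :=
  pi w.1 / r w.1 * path_prod Q w.1.2 w.2 * path_weight w.1 w.2.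

Definition expect_window n (G : window n -> R) : R := \sum_w window_law w * G w.

Lemma pi_ge0 z : 0 <= pi z.
Proof. by case: pi_inv => -[]. Qed.

Lemma window_law_ge0 n (w : window n) : 0 <= window_law w.
Proof.
rewrite mulr_ge0 ?(ltW (path_weight_gt0 _ _)) // mulr_ge0 ?path_prod_ge0 //.
by rewrite divr_ge0 ?pi_ge0 // ltW.
Qed.

Lemma expect_window_last n (G : E * E -> E -> R) :
  expect_window (fun w : window n => G w.1 (last w.1.2 w.2)) =
  \sum_z \sum_z' pi z * mpow Rs n z z' * G z z'.2.
Proof.
rewrite /expect_window sum_pair; apply: eq_bigr => z _.
transitivity (pi z / r z * \sum_z' mpow Phi n z z' * r z' * G z z'.2).
  rewrite -sum_path_weight big_distrr /=; apply: eq_bigr => us _.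
  by rewrite /window_law /=; ring.
rewrite big_distrr /=; apply: eq_bigr => z' _; rewrite mpow_Rstar; last exact: r_neq0.
by field; rewrite r_neq0.
Qed.

Lemma expect_window1 n : expect_window (fun _ : window n => 1) = 1.
Proof.
rewrite (expect_window_last n (fun _ _ => 1)).
transitivity (\sum_z pi z); last by case: pi_inv => -[].
apply: eq_bigr => z _; under eq_bigr do rewrite mulr1.
by rewrite -big_distrr /= sum_mpow_Rs mulr1.
Qed.

Lemma expect_window_first n :
  expect_window (fun w : window n => fR w.1.1 w.1.2) = expect pi (fun z => f z.1 z.2).
Proof.
rewrite (expect_window_last n (fun z _ => fR z.1 z.2)); apply: eq_bigr => z _.
under eq_bigr do rewrite mulrAC.
by rewrite -big_distrr /= sum_mpow_Rs mulr1.
Qed.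

Lemma expect_window_lagged n :
  expect_window (fun w : window n => fR w.1.1 (last w.1.2 w.2)) = lagged_expect Rs pi f n.
Proof. by rewrite (expect_window_last n (fun z y => fR z.1 y)) (lagged_expectE _ _ pi_inv). Qed.

Definition gain n (w : window n) : R := fR w.1.1 (last w.1.2 w.2) - fR w.1.1 w.1.2.

Definition potential n (w : window n) : R :=
  ln (r (w.1.1, last w.1.2 w.2)) - ln (path_weight w.1 w.2).

Lemma expect_window_gain n :
  expect_window (@gain n) = lagged_expect Rs pi f n - expect pi (fun z => f z.1 z.2).
Proof.
rewrite -expect_window_lagged -(expect_window_first n) /expect_window -sumrB.
by apply: eq_bigr => w _; rewrite mulrBr.
Qed.

Section Step.
Variable m : nat.
Implicit Types (w : window m.+1) (z : E * E).
Local Notation step := (window m.+1 * (E * E))%type.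

Definition shift w z' : window m.+1 :=
  ((z'.1, thead w.2), [tuple of rcons (behead w.2) z'.2]).

Definition unshift z w : window m.+1 * (E * E) :=
  ((z, [tuple of belast w.1.2 w.2]), (w.1.1, last w.1.2 w.2)).

Lemma shift_unshift z w : shift (unshift z w).1 (unshift z w).2 = w.
Proof.
case: w => [[x y] [[|a s] /= s_size]] //; congr (_, _); apply: val_inj => /=.
by rewrite -lastI.
Qed.

Lemma unshift_shift w z' : unshift w.1 (shift w z') = (w, z').
Proof.
case: w z' => [z us] [x' y']; case/tupleP: us => y vs /=.
by congr ((_, _), _); [apply: val_inj; rewrite /= belast_rcons | rewrite /= last_rcons].
Qed.

(* For a step (w, z') = ((X_0, Y_0, ..., Y_T), (X_1, Y_{T+1})), [step_weight * shift_factor]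
   is the law of the step of the window chain, and [step_weight * restart_factor] the law
   where (X_1, Y_{T+1}) is drawn from R* at (X_0, Y_T) instead. *)
Definition step_weight w z' : R := window_law w * P w.1.1 z'.1 * Q (last w.1.2 w.2) z'.2.

Definition shift_factor w z' : R :=
  tilt z'.1 (thead w.2) * path_weight (shift w z').1 (shift w z').2 / path_weight w.1 w.2.

Definition restart_factor w z' : R := tilt z'.1 z'.2 * r z' / r (w.1.1, last w.1.2 w.2).

Lemma step_weight_ge0 w z' : 0 <= step_weight w z'.
Proof. exact: mulr_ge0 (mulr_ge0 (window_law_ge0 w) (P_ge0 _ _)) (Q_ge0 _ _). Qed.

Lemma shift_factor_gt0 w z' : 0 < shift_factor w z'.
Proof. by rewrite /shift_factor divr_gt0 ?mulr_gt0 ?tilt_gt0 ?path_weight_gt0. Qed.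

Lemma restart_factor_gt0 w z' : 0 < restart_factor w z'.
Proof. by rewrite /restart_factor divr_gt0 ?mulr_gt0 ?tilt_gt0 ?r_gt0. Qed.

Lemma sum_shift_step (G : window m.+1 -> R) :
  \sum_(o : step) step_weight o.1 o.2 * shift_factor o.1 o.2 * G o.1 = expect_window G.
Proof.
rewrite sum_pair; apply: eq_bigr => -[z us] _; case/tupleP: us => y vs.
set w := (z, _); have pw_neq0 := lt0r_neq0 (path_weight_gt0 w.1 w.2).
transitivity (window_law w * G w / path_weight w.1 w.2 *
  \sum_x P z.1 x * tilt x y * \sum_y' Q (last y vs) y' * path_weight (x, y) (rcons vs y')).
  rewrite sum_pair big_distrr; apply: eq_bigr => x _; rewrite !big_distrr /=.
  by apply: eq_bigr => y' _; rewrite /step_weight /shift_factor /=; field.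
under eq_bigr => x _ do rewrite (path_weight_rcons (x, y) vs).
by rewrite -[\sum_x _]/(path_weight w.1 w.2); field.
Qed.

Lemma thead_unshift z w : thead (unshift z w).1.2 = w.1.2.
Proof. by case: w => [z' [[|a s] ?]]. Qed.

Lemma sum_unshift_step w :
  \sum_z step_weight (unshift z w).1 (unshift z w).2 *
    shift_factor (unshift z w).1 (unshift z w).2 = window_law w.
Proof.
under eq_bigr => z _ do rewrite /shift_factor shift_unshift thead_unshift.
transitivity (\sum_z pi z / r z * Phi z w.1 * (path_prod Q w.1.2 w.2 * path_weight w.1 w.2)).
  apply: eq_bigr => z _; have pw_neq0 := lt0r_neq0 (path_weight_gt0 z (belast w.1.2 w.2)).
  transitivity (pi z / r z * (path_prod Q z.2 (belast w.1.2 w.2) *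
    Q (last z.2 (belast w.1.2 w.2)) (last w.1.2 w.2)) *
    P z.1 w.1.1 * tilt w.1.1 w.1.2 * path_weight w.1 w.2).
    by rewrite /step_weight /window_law /=; field; rewrite ?r_neq0 ?pw_neq0.
  by rewrite path_prod_belast PhiE; ring.
by rewrite -mulr_suml pi_div_r_Phi /window_law; ring.
Qed.

Lemma sum_shift_step_shift (G : window m.+1 -> R) :
  \sum_(o : step) step_weight o.1 o.2 * shift_factor o.1 o.2 *
    G (shift o.1 o.2) = expect_window G.
Proof.
rewrite (reindex (fun p => unshift p.1 p.2)); last first.
  exists (fun o => (o.1.1, shift o.1 o.2)) => [[z w] _ | o _].
    by rewrite shift_unshift.
  by rewrite unshift_shift -!surjective_pairing.
under eq_bigr do rewrite shift_unshift.
rewrite sum_pair exchange_big /=; apply: eq_bigr => w _.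
by rewrite -mulr_suml sum_unshift_step.
Qed.

Lemma sum_restart_step :
  \sum_(o : step) step_weight o.1 o.2 * restart_factor o.1 o.2 = 1.
Proof.
rewrite -(expect_window1 m.+1) sum_pair; apply: eq_bigr => w _.
rewrite mulr1 -[RHS]mulr1 -(Rstar_rows1 (r_neq0 (w.1.1, last w.1.2 w.2)) (r_eigen _)).
rewrite big_distrr; apply: eq_bigr => z' _.
by rewrite /step_weight /restart_factor /Rstar PhiE /=; ring.
Qed.

Lemma ln_restart_shift w z' :
  ln (restart_factor w z') - ln (shift_factor w z') =
  th * gain (shift w z') + potential (shift w z') - potential w.
Proof.
case: z' => x' y'; rewrite /restart_factor /shift_factor /gain /potential /= last_rcons.
rewrite !ln_div ?lnM ?posrE ?mulr_gt0 ?tilt_gt0 ?r_gt0 ?path_weight_gt0 //.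
by rewrite /tilt !expRK; ring.
Qed.

Lemma sum_step_ln_ratio :
  \sum_(o : step) step_weight o.1 o.2 * shift_factor o.1 o.2 *
    (ln (restart_factor o.1 o.2) - ln (shift_factor o.1 o.2)) =
  th * (lagged_expect Rs pi f m.+1 - expect pi (fun z => f z.1 z.2)).
Proof.
under eq_bigr do rewrite ln_restart_shift mulrBr mulrDr.
rewrite sumrB big_split /= sum_shift_step_shift sum_shift_step addrK.
under eq_bigr do rewrite mulrCA.
by rewrite -big_distrr /= sum_shift_step_shift expect_window_gain.
Qed.

Lemma lagged_lt_of_step o : 0 < th ->
  0 < step_weight o.1 o.2 -> restart_factor o.1 o.2 != shift_factor o.1 o.2 ->
  lagged_expect Rs pi f m.+1 < expect pi (fun z => f z.1 z.2).
Proof.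
move=> th_gt0 step_gt0 factor_neq.
have step_mass : \sum_(o : step) step_weight o.1 o.2 * shift_factor o.1 o.2 = 1.
  by rewrite -(expect_window1 m.+1) -sum_shift_step; apply: eq_bigr => o' _; rewrite mulr1.
have := gibbs_lt (fun o => step_weight_ge0 o.1 o.2) (fun o => shift_factor_gt0 o.1 o.2)
  (fun o => restart_factor_gt0 o.1 o.2) step_gt0 factor_neq.
by rewrite sum_step_ln_ratio sum_restart_step step_mass subrr pmulr_rlt0 // subr_lt0.
Qed.

End Step.

Section Cycle.
Variables (m n : nat) (xs ys : nat -> E).
Hypotheses (n_gt0 : (0 < n)%N) (xs_cycle : is_cycle P n xs) (ys_cycle : is_cycle Q n ys).
Hypotheses (P_irr : irreducible P) (Q_irr : irreducible Q) (P_aper : aperiodic P).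
Hypothesis th_gt0 : 0 < th.

Let X k := xs (k %% n)%N.
Let Y k := ys (k %% n)%N.

Definition cycle_window k : window m.+1 :=
  ((X k, Y k), [tuple of mkseq (fun i => Y (k + i.+1)%N) m.+1]).

Definition cycle_step k : E * E := (X k.+1, Y (k + m.+2)%N).

Lemma shift_cycle_window k : shift (cycle_window k) (cycle_step k) = cycle_window k.+1.
Proof.
rewrite /shift /cycle_window /cycle_step /=; congr (_, _).
  by rewrite /thead (tnth_nth (Y 0%N)) nth_mkseq // addn1.
apply: val_inj => /=; rewrite [RHS]mkseqS addSnnS; congr rcons.
by rewrite /mkseq /= (iotaDl 1 0 m) -map_comp; apply: eq_map => i /=; rewrite add1n addSnnS.
Qed.

Lemma cycle_window_periodic k : cycle_window (k + n)%N = cycle_window k.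
Proof.
rewrite /cycle_window /X /Y !modnDr; congr (_, _); apply: val_inj => /=.
by apply: eq_mkseq => i; rewrite addnAC modnDr.
Qed.

Lemma step_weight_cycle_gt0 k : 0 < step_weight (cycle_window k) (cycle_step k).
Proof.
have last_eq : last (Y k) (mkseq (fun i => Y (k + i.+1)%N) m.+1) = Y (k + m.+1)%N.
  by rewrite mkseqS last_rcons.
apply: mulr_gt0; [apply: mulr_gt0|].
- apply: mulr_gt0 (path_weight_gt0 _ _); apply: mulr_gt0.
    by apply: divr_gt0; [exact: (pi_cycle_gt0 P_irr Q_irr P_aper n_gt0) | exact: r_gt0].
  exact: (path_prod_mkseq_gt0 (x := Y) _ _ (is_cycle_mod n_gt0 ys_cycle)).
- exact: (is_cycle_mod n_gt0 xs_cycle k).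
- rewrite -[last _ _]/(last (Y k) (mkseq (fun i => Y (k + i.+1)%N) m.+1)) last_eq.
  rewrite -[(cycle_step k).2]/(Y (k + m.+2)%N) [(k + m.+2)%N]addnS.
  exact: (is_cycle_mod n_gt0 ys_cycle).
Qed.

Lemma cycle_sums_eq :
  (forall k, restart_factor (cycle_window k) (cycle_step k) =
             shift_factor (cycle_window k) (cycle_step k)) ->
  \sum_(k < n) f (xs k) (ys k) = \sum_(k < n) f (xs k) (ys ((k + m.+1) %% n)%N).
Proof.
move=> factor_eq.
(* By [ln_restart_shift], [th * gain + potential] telescopes around the cycle. *)
pose Psi k := th * gain (cycle_window k) + potential (cycle_window k).
have Psi_step k : Psi k.+1 - Psi k + th * gain (cycle_window k) = 0.
  have := ln_restart_shift (cycle_window k) (cycle_step k).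
  by rewrite factor_eq subrr shift_cycle_window /Psi => ->; ring.
have Psi_n : Psi n = Psi 0%N by rewrite /Psi -[n]add0n cycle_window_periodic.
have gain_sum : \sum_(0 <= k < n) gain (cycle_window k) = 0.
  have : \sum_(0 <= k < n) (Psi k.+1 - Psi k + th * gain (cycle_window k)) = 0.
    by apply: big1 => k _; exact: Psi_step.
  rewrite big_split telescope_sumr //= Psi_n subrr add0r -big_distrr /=.
  by move/eqP; rewrite mulf_eq0 gt_eqF //= => /eqP.
apply/eqP; rewrite -(eqr_int R) !mulrz_sumr eq_sym -subr_eq0 -sumrB.
rewrite -[X in _ == X]gain_sum big_mkord; apply/eqP; apply: eq_bigr => k _.
rewrite /gain -[last _ _]/(last (Y k) (mkseq (fun i => Y (k + i.+1)%N) m.+1)).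
rewrite mkseqS last_rcons.
by rewrite /= /X /Y (modn_small (ltn_ord k)).
Qed.

Lemma lagged_lt_cycle :
  \sum_(k < n) f (xs k) (ys k) != \sum_(k < n) f (xs k) (ys ((k + m.+1) %% n)%N) ->
  lagged_expect Rs pi f m.+1 < expect pi (fun z => f z.1 z.2).
Proof.
move=> sums_neq.
have [[k factor_neq] | factor_eq] := pselect (exists k,
  restart_factor (cycle_window k) (cycle_step k) != shift_factor (cycle_window k) (cycle_step k)).
  exact: (lagged_lt_of_step (o := (cycle_window k, cycle_step k)) th_gt0
    (step_weight_cycle_gt0 k)).
case/negP: sums_neq; apply/eqP/cycle_sums_eq => k.
by apply/eqP; apply: contraT => factor_neq; case: factor_eq; exists k.
Qed.

End Cycle.

End WindowChain.

Theorem lemma5p10 (R : realType) (E : finType) (P Q : E -> E -> R)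
  (piP piQ : E -> R) (f : E -> E -> int)
  (thetastar : R) (rstar : (E * E)%type -> R) (pistar : (E * E)%type -> R) :
  stochastic P -> irreducible P -> aperiodic P ->
  stochastic Q -> irreducible Q -> aperiodic Q ->
  invariant_prob P piP -> invariant_prob Q piQ ->
  gcd_values_one f ->
  expect (fun z : E * E => piP z.1 * piQ z.2) (fun z => f z.1 z.2) < 0 ->
  condC1 P Q f -> condC2 P Q f ->
  0 < thetastar -> spectral_radius (Phi P Q f thetastar) = 1 ->
  (forall z, 0 < rstar z) ->
  (forall z, \sum_(z' : E * E) Phi P Q f thetastar z z' * rstar z' = rstar z) ->
  invariant_prob (Rstar (Phi P Q f thetastar) rstar) pistar ->
  forall T : nat, (1 <= T)%N ->
    lagged_expect (Rstar (Phi P Q f thetastar) rstar) pistar f T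
    < expect pistar (fun z => f z.1 z.2).
Proof.
move=> [P_ge0 P_rows1] P_irr P_aper [Q_ge0 _] Q_irr _ _ _ _ _ _ C2 th_gt0 _ r_gt0 r_eigen pi_inv.
case=> [//|m] _; have [n [xs [ys [n_gt0 xs_cycle ys_cycle sums_neq]]]] := C2 m.+1 isT.
exact: (lagged_lt_cycle P_ge0 P_rows1 Q_ge0 r_gt0 r_eigen pi_inv n_gt0 xs_cycle ys_cycle
  P_irr Q_irr P_aper th_gt0 sums_neq).
Qed.
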